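(* Let $R$ be a discrete valuation ring with uniformizer $\pi$, and let $T$ be an $R$-module such that $\pi^NT=0$ for some $N\geq1$. Let $\pi_T$ be the endomorphism of $T$ given by multiplication by $\pi$, and define $m_-(T)=\sum_{n\geq0}(\mathrm{Im}\,\pi_T^n\cap\mathrm{Ker}\,\pi_T^n)$ and $m_+(T)=\bigcap_{n\geq0}(\mathrm{Im}\,\pi_T^n+\mathrm{Ker}\,\pi_T^n)$. Then $\pi\cdot m_+(T)\subset m_-(T)\subset m_+(T)$, and there are $R$-module isomorphisms $m_+(T)\simeq T/m_-(T)$ and $m_-(T)\simeq T/m_+(T)$. *)

From HB Require Import structures.
From mathcomp Require Import all_boot all_order all_algebra.
Set Implicit Arguments. Unset Strict Implicit. Unset Printing Implicit Defensive.
Import Order.TTheory GRing.Theory Num.Theory.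
Local Open Scope ring_scope.

Definition is_DVR_with_uniformizer (R : idomainType) (pi : R) : Prop :=
  pi != 0 /\ pi \isn't a GRing.unit /\
  (forall a : R, a != 0 -> exists (u : R) (n : nat), u \is a GRing.unit /\ a = u * pi ^+ n).

Definition piT (R : idomainType) (T : lmodType R) (pi : R) (x : T) : T := pi *: x.
Definition piT_pow (R : idomainType) (T : lmodType R) (pi : R) (n : nat) : T -> T :=
  iter n (piT pi).

Definition ImP (R : idomainType) (T : lmodType R) (pi : R) (n : nat) (y : T) : Prop :=
  exists x : T, y = piT_pow pi n x.
Definition KerP (R : idomainType) (T : lmodType R) (pi : R) (n : nat) (y : T) : Prop :=
  piT_pow pi n y = 0.

Definition m_minus (R : idomainType) (T : lmodType R) (pi : R) (x : T) : Prop :=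
  exists (k : nat) (f : nat -> T),
    (forall i, (i < k)%N -> ImP pi i (f i) /\ KerP pi i (f i)) /\
    x = \sum_(i < k) f i.

Definition m_plus (R : idomainType) (T : lmodType R) (pi : R) (x : T) : Prop :=
  forall n : nat, exists a b : T, ImP pi n a /\ KerP pi n b /\ x = a + b.

Definition is_Rlinear (R : idomainType) (T : lmodType R) (f : T -> T) : Prop :=
  forall (c : R) (x y : T), f (c *: x + y) = c *: f x + f y.

(* A ~= T / B  (A, B submodules of T), expressed via the first isomorphism
   theorem: there is an R-linear map T -> T with image exactly A and kernel
   exactly B. *)
Definition iso_to_quotient (R : idomainType) (T : lmodType R) (A B : T -> Prop) : Prop :=
  exists f : T -> T, is_Rlinear f /\
    (forall y, A y <-> exists x, y = f x) /\
    (forall x, B x <-> f x = 0).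

From HB Require Import structures.
From mathcomp Require Import all_boot all_order all_algebra.
From mathcomp Require Import boolp.
From mathcomp Require classical_sets.
From mathcomp Require Import zify ring.
Import Order.TTheory GRing.Theory Num.Theory.
Local Open Scope ring_scope.
Set Implicit Arguments. Unset Strict Implicit. Unset Printing Implicit Defensive.

(* A module killed by pi^N is a direct sum of cyclic modules R e ~ R/pi^k.  Zorn's
   lemma gives a maximal family E that is pure-independent (a combination is divisible
   by pi^n only if each of its terms is) and in which pi^v e is never divisible by
   pi^(v+1) unless it vanishes; Kulikov's argument shows that such a family spans T.
   On a summand R e of exponent k, m_+ = pi^(k/2) R e and m_- = pi^(k - k/2) R e
   (rounding down), whence pi m_+ <= m_-.  Multiplying every e-coordinate by
   pi^(k/2), resp. pi^(k - k/2), is an endomorphism with image m_+ and kernel m_-,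
   resp. image m_- and kernel m_+. *)

Lemma ex_least (P : nat -> Prop) :
  (exists n, P n) -> exists2 m, P m & forall k, P k -> (m <= k)%N.
Proof.
case=> n Pn; have exP : exists n, `[< P n >] by exists n; apply/asboolP.
by case: (ex_minnP exP) => m /asboolP Pm mP; exists m => // k /asboolP /mP.
Qed.

Lemma ex_greatest (P : nat -> Prop) b : (exists n, P n) ->
  (forall n, P n -> (n <= b)%N) -> exists2 m, P m & forall k, P k -> (k <= m)%N.
Proof.
case=> n Pn Pb; have exP : exists n, `[< P n >] by exists n; apply/asboolP.
have ubP i : `[< P i >] -> (i <= b)%N by move/asboolP/Pb.
by case: (ex_maxnP exP ubP) => m /asboolP Pm mP; exists m => // k /asboolP /mP.
Qed.

Lemma big_uniq_widen (I : eqType) (V : nmodType) (r s : seq I) (F : I -> V) :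
  uniq r -> uniq s -> {subset r <= s} ->
  \sum_(i <- r) F i = \sum_(i <- s) (if i \in r then F i else 0).
Proof.
move=> ur us rs; rewrite -big_mkcond -big_filter; apply: perm_big.
apply: uniq_perm => //; first exact: filter_uniq.
by move=> i; rewrite mem_filter; case ir: (i \in r) => //=; rewrite rs.
Qed.

Lemma sub_undup_catl (I : eqType) (r s : seq I) : {subset r <= undup (r ++ s)}.
Proof. by move=> i ir; rewrite mem_undup mem_cat ir. Qed.

Lemma sub_undup_catr (I : eqType) (r s : seq I) : {subset s <= undup (r ++ s)}.
Proof. by move=> i si; rewrite mem_undup mem_cat si orbT. Qed.

Section PiDivisibility.
Variables (R : idomainType) (pi : R) (T : lmodType R).

Definition pi_div n (y : T) := exists t, y = pi ^+ n *: t.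

Lemma scale_exprD m n (x : T) : pi ^+ m *: (pi ^+ n *: x) = pi ^+ (m + n) *: x.
Proof. by rewrite scalerA exprD. Qed.

Lemma piT_powE n (x : T) : piT_pow pi n x = pi ^+ n *: x.
Proof.
elim: n => [|n IH]; first by rewrite /piT_pow /= expr0 scale1r.
by rewrite /piT_pow iterS -/(piT_pow pi n x) IH /piT scalerA -exprS.
Qed.

Lemma ImPE n (y : T) : ImP pi n y <-> pi_div n y.
Proof. by split=> -[x ->]; exists x; rewrite piT_powE. Qed.

Lemma KerPE n (y : T) : KerP pi n y <-> pi ^+ n *: y = 0.
Proof. by rewrite /KerP piT_powE. Qed.

Lemma pi_div0 n : pi_div n 0.
Proof. by exists 0; rewrite scaler0. Qed.

Lemma pi_divD n x y : pi_div n x -> pi_div n y -> pi_div n (x + y).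
Proof. by move=> [a ->] [b ->]; exists (a + b); rewrite scalerDr. Qed.

Lemma pi_divZ n r x : pi_div n x -> pi_div n (r *: x).
Proof. by move=> [a ->]; exists (r *: a); rewrite !scalerA mulrC. Qed.

Lemma pi_divB n x y : pi_div n x -> pi_div n y -> pi_div n (x - y).
Proof. by move=> hx hy; rewrite -scaleN1r; apply/pi_divD/pi_divZ. Qed.

Lemma pi_div_leq m n x : (m <= n)%N -> pi_div n x -> pi_div m x.
Proof. by move=> mn [a ->]; exists (pi ^+ (n - m) *: a); rewrite scale_exprD subnKC. Qed.

Lemma pi_div_scale m n x : (n <= m)%N -> pi_div n (pi ^+ m *: x).
Proof. by move=> nm; apply: (pi_div_leq nm); exists x. Qed.

Lemma pi_div_scaleD m n x : pi_div n x -> pi_div (m + n) (pi ^+ m *: x).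
Proof. by move=> [t ->]; exists t; rewrite scale_exprD. Qed.

Lemma scale_unit_eq0 u (x : T) : u \is a GRing.unit -> u *: x = 0 -> x = 0.
Proof. by move=> Uu ux; rewrite -[x]scale1r -(mulVr Uu) -scalerA ux scaler0. Qed.

Lemma m_minus0 : m_minus pi (0 : T).
Proof. by exists 0%N, (fun _ => 0); split => //; rewrite big_ord0. Qed.

Lemma m_minus_ImKer n (y : T) : pi_div n y -> pi ^+ n *: y = 0 -> m_minus pi y.
Proof.
move=> hy ky; exists n.+1, (fun i => if i == n then y else 0); split.
  move=> i _; rewrite ImPE KerPE; case: eqP => [->|_] //.
  by rewrite scaler0; split => //; apply: pi_div0.
rewrite big_ord_recr /= eqxx big1 ?add0r // => i _.
by rewrite (ltn_eqF (ltn_ord i)).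
Qed.

Lemma m_minusD (x y : T) : m_minus pi x -> m_minus pi y -> m_minus pi (x + y).
Proof.
move=> [k1 [f1 [H1 ->]]] [k2 [f2 [H2 ->]]].
pose ext k (f : nat -> T) i := if (i < k)%N then f i else 0.
have extP k f : (forall i, (i < k)%N -> ImP pi i (f i) /\ KerP pi i (f i)) ->
    forall i, pi_div i (ext k f i) /\ pi ^+ i *: ext k f i = 0.
  move=> H i; rewrite /ext; case: ifP => [ik|_].
    by have [/ImPE ? /KerPE ?] := H i ik.
  by rewrite scaler0; split; first exact: pi_div0.
exists (maxn k1 k2), (fun i => ext k1 f1 i + ext k2 f2 i); split.
  move=> i _; have [d1 z1] := extP _ _ H1 i; have [d2 z2] := extP _ _ H2 i.
  by rewrite ImPE KerPE scalerDr z1 z2 addr0; split => //; apply: pi_divD.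
rewrite big_split /= (big_ord_widen _ (fun i => f1 i) (leq_maxl k1 k2)).
by rewrite (big_ord_widen _ (fun i => f2 i) (leq_maxr k1 k2)) -!big_mkcond.
Qed.

Lemma m_minus_sum (s : seq T) (F : T -> T) :
  (forall e, e \in s -> m_minus pi (F e)) -> m_minus pi (\sum_(e <- s) F e).
Proof.
by move=> H; rewrite big_seq; apply: big_ind => //; [exact: m_minus0 | exact: m_minusD].
Qed.

Lemma m_plus0 : m_plus pi (0 : T).
Proof.
by move=> n; exists 0, 0; rewrite ImPE KerPE scaler0 addr0; split => //; apply: pi_div0.
Qed.

Lemma m_plusD (x y : T) : m_plus pi x -> m_plus pi y -> m_plus pi (x + y).
Proof.
move=> hx hy n; have [a1 [b1 [/ImPE ha1 [/KerPE hb1 ->]]]] := hx n.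
have [a2 [b2 [/ImPE ha2 [/KerPE hb2 ->]]]] := hy n.
exists (a1 + a2), (b1 + b2); rewrite ImPE KerPE scalerDr hb1 hb2 addr0 addrACA.
by split => //; apply: pi_divD.
Qed.

Lemma m_plus_sum (s : seq T) (F : T -> T) :
  (forall e, e \in s -> m_plus pi (F e)) -> m_plus pi (\sum_(e <- s) F e).
Proof.
by move=> H; rewrite big_seq; apply: big_ind => //; [exact: m_plus0 | exact: m_plusD].
Qed.

Lemma m_minus_sub_m_plus (x : T) : m_minus pi x -> m_plus pi x.
Proof.
move=> [k [f [H ->]]]; rewrite -(big_map (fun i : 'I_k => f i) xpredT id).
apply: m_plus_sum => _ /mapP [i _ ->] m; have [/ImPE hi /KerPE ki] := H i (ltn_ord i).
case: (leqP m i) => mi.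
  by exists (f i), 0; rewrite addr0 ImPE KerPE scaler0; split => //; apply: pi_div_leq hi.
exists 0, (f i); rewrite add0r ImPE KerPE; split; first exact: pi_div0.
by rewrite -(subnK (ltnW mi)) -scale_exprD ki scaler0.
Qed.

Section Bounded.
Variable N : nat.
Hypothesis hT : forall x : T, pi ^+ N *: x = 0.

Lemma scale_pow_ge_eq0 m (x : T) : (N <= m)%N -> pi ^+ m *: x = 0.
Proof. by move=> Nm; rewrite -(subnK Nm) -scale_exprD hT scaler0. Qed.

Lemma pi_div_eq0 n (x : T) : (N <= n)%N -> pi_div n x -> x = 0.
Proof. by move=> Nn [a ->]; rewrite scale_pow_ge_eq0. Qed.

End Bounded.
End PiDivisibility.

Lemma dvr_factor (R : idomainType) (pi r : R) : is_DVR_with_uniformizer pi ->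
  r != 0 -> exists u w, u \is a GRing.unit /\ r = u * pi ^+ w.
Proof. by case=> _ [_ H]; apply: H. Qed.

Section PureFamilies.
Variables (R : idomainType) (pi : R) (T : lmodType R) (N : nat).
Hypothesis hR : is_DVR_with_uniformizer pi.
Hypothesis hT : forall x : T, pi ^+ N *: x = 0.
Variable E : T -> Prop.

Definition all_in (es : seq T) := forall e, e \in es -> E e.
Definition comb (es : seq T) (c : T -> R) := \sum_(e <- es) c e *: e.
Definition in_span x := exists es c, [/\ uniq es, all_in es & x = comb es c].

Definition pure_indep := forall es c n, uniq es -> all_in es ->
  pi_div pi n (comb es c) -> forall e, e \in es -> pi_div pi n (c e *: e).
Definition exact_heights := forall e, E e -> forall v,
  pi_div pi v.+1 (pi ^+ v *: e) -> pi ^+ v *: e = 0.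

Lemma comb_widen es us c : uniq es -> uniq us -> {subset es <= us} ->
  comb es c = comb us (fun e => if e \in es then c e else 0).
Proof.
move=> ues uus sub; rewrite /comb (big_uniq_widen _ ues uus sub).
by apply: eq_bigr => e _; case: (e \in es); rewrite ?scale0r.
Qed.

Lemma comb_lin us r c1 c2 :
  comb us (fun e => r * c1 e + c2 e) = r *: comb us c1 + comb us c2.
Proof.
rewrite /comb scaler_sumr -big_split; apply: eq_bigr => e _.
by rewrite scalerDl scalerA.
Qed.

Lemma all_in_undup_cat es es' : all_in es -> all_in es' -> all_in (undup (es ++ es')).
Proof. by move=> h h' e; rewrite mem_undup mem_cat => /orP[/h|/h']. Qed.

Lemma comb_lin_undup es es' r c c' :
  uniq es -> uniq es' -> r *: comb es c + comb es' c' =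
  comb (undup (es ++ es')) (fun e => r * (if e \in es then c e else 0) +
                                     (if e \in es' then c' e else 0)).
Proof.
move=> ues ues'; rewrite comb_lin -!comb_widen ?undup_uniq //.
  exact: sub_undup_catr.
exact: sub_undup_catl.
Qed.

Lemma in_span_lin r x y : in_span x -> in_span y -> in_span (r *: x + y).
Proof.
move=> [es [c [ues ies ->]]] [es' [c' [ues' ies' ->]]].
rewrite comb_lin_undup //; eexists; eexists; split; last by [].
  exact: undup_uniq.
exact: all_in_undup_cat.
Qed.

Lemma in_span0 : in_span 0.
Proof. by exists [::], (fun _ => 0); split => //; rewrite /comb big_nil. Qed.

Lemma in_spanD x y : in_span x -> in_span y -> in_span (x + y).
Proof. by rewrite -{2}[x]scale1r; apply: in_span_lin. Qed.

Lemma in_spanZ r x : in_span x -> in_span (r *: x).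
Proof. by move=> hx; rewrite -[_ *: _]addr0; apply: in_span_lin => //; apply: in_span0. Qed.

Lemma in_spanB x y : in_span x -> in_span y -> in_span (x - y).
Proof. by move=> hx hy; rewrite -scaleN1r; apply/in_spanD/in_spanZ. Qed.

Lemma in_span_gen e : E e -> in_span e.
Proof.
move=> Ee; exists [:: e], (fun _ => 1); split => //.
  by move=> x; rewrite inE => /eqP ->.
by rewrite /comb big_seq1 scale1r.
Qed.

Section Independence.
Hypothesis hPI : pure_indep.

Lemma comb_eq0 us d : uniq us -> all_in us -> comb us d = 0 ->
  forall e, e \in us -> d e *: e = 0.
Proof.
move=> uus ius z e eu; apply: (pi_div_eq0 hT (leqnn N)).
by apply: hPI eu => //; rewrite z; apply: pi_div0.
Qed.

Lemma comb_unique es c es' c' : uniq es -> all_in es -> uniq es' -> all_in es' ->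
  comb es c = comb es' c' -> forall e,
  (if e \in es then c e else 0) *: e = (if e \in es' then c' e else 0) *: e.
Proof.
move=> ues ies ues' ies' eqc e; apply/eqP; rewrite -subr_eq0 -scalerBl; apply/eqP.
have := comb_lin_undup (-1) c' c ues' ues.
rewrite -eqc scaleN1r addNr => /esym /comb_eq0.
case eu: (e \in undup (es' ++ es)); last first.
  move: eu; rewrite mem_undup mem_cat => /negbT; rewrite negb_or.
  by case/andP => /negbTE -> /negbTE ->; rewrite subrr scale0r.
move/(_ (undup_uniq _) (all_in_undup_cat ies' ies) e eu).
by rewrite mulN1r addrC.
Qed.

Hypothesis hHE : exact_heights.

Lemma pi_div_coef e c n : E e -> pi_div pi n (c *: e) ->
  exists d, c *: e = d *: (pi ^+ n *: e).
Proof.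
move=> Ee hc; case: (eqVneq c 0) => [->|c0]; first by exists 0; rewrite !scale0r.
have [u [w [Uu def_c]]] := dvr_factor hR c0.
rewrite def_c -scalerA in hc *.
case: (leqP n w) => nw.
  by exists (u * pi ^+ (w - n)); rewrite -scalerA scale_exprD subnK.
have hw : pi_div pi w.+1 (pi ^+ w *: e).
  by have := pi_divZ u^-1 (pi_div_leq nw hc); rewrite scalerA mulVr ?scale1r.
by exists 0; rewrite scale0r (hHE Ee hw) scaler0.
Qed.

Lemma in_span_pi_div x m : in_span x -> pi_div pi m x ->
  exists2 s, in_span s & x = pi ^+ m *: s.
Proof.
move=> [es [c [ues ies ->]]] hx.
have [d hd] : {d : T -> R & forall e, e \in es -> c e *: e = d e *: (pi ^+ m *: e)}.
  apply: (choice (P := fun e d => e \in es -> c e *: e = d *: (pi ^+ m *: e))) => e.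
  case ee: (e \in es); last by exists 0.
  by have [d ->] := pi_div_coef (ies e ee) (hPI ues ies hx ee); exists d.
exists (comb es d); first by exists es, d.
rewrite /comb scaler_sumr big_seq [RHS]big_seq; apply: eq_bigr => e ee.
by rewrite hd // !scalerA mulrC.
Qed.

End Independence.
End PureFamilies.

Section Extension.
Variables (R : idomainType) (pi : R) (T : lmodType R) (N : nat).
Hypothesis hR : is_DVR_with_uniformizer pi.
Hypothesis hT : forall x : T, pi ^+ N *: x = 0.
Variable A : T -> Prop.
Hypothesis hPI : pure_indep pi A.
Hypothesis hHE : exact_heights pi A.
Local Notation S := (in_span A).

Lemma socle_notin_span x : ~ S x -> exists2 x2, ~ S x2 & pi *: x2 = 0.
Proof.
move=> nSx.
have [j Sj jmin] : exists2 j, S (pi ^+ j *: x) & forall k, S (pi ^+ k *: x) -> (j <= k)%N.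
  by apply: ex_least; exists N; rewrite hT; apply: in_span0.
have j0 : (0 < j)%N by case: j Sj {jmin} => //; rewrite expr0 scale1r.
pose x1 := pi ^+ j.-1 *: x.
have nSx1 : ~ S x1 by move=> /jmin; rewrite -ltnS prednK // ltnn.
have Spx1 : S (pi *: x1) by rewrite /x1 scalerA -exprS prednK.
have [s Ss ps] : exists2 s, S s & pi *: x1 = pi ^+ 1 *: s.
  by apply: in_span_pi_div => //; exists x1; rewrite expr1.
exists (x1 - s); last by rewrite scalerBr ps expr1 subrr.
by move=> S2; apply: nSx1; rewrite -(subrK s x1); apply: in_spanD.
Qed.

Lemma lift_socle_coset x2 w h : pi *: x2 = 0 -> S (w - x2) -> pi_div pi h.+1 w ->
  exists y, [/\ S (y - x2), pi *: y = 0 & pi_div pi h.+1 y].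
Proof.
move=> px2 Sw [t wt].
have Spw : S (pi *: w) by have := in_spanZ pi Sw; rewrite scalerBr px2 subr0.
have [s Ss ps] : exists2 s, S s & pi *: w = pi ^+ h.+2 *: s.
  by apply: in_span_pi_div => //; exists t; rewrite wt scalerA -exprS.
exists (w - pi ^+ h.+1 *: s); split.
- by rewrite addrAC; apply: in_spanB => //; apply: in_spanZ.
- by rewrite scalerBr ps scalerA -exprS subrr.
- by apply: pi_divB; [exists t | exists s].
Qed.

(* Kulikov's step: x2 is killed by pi and lies outside S; among the y in x2 + S
   killed by pi, one of maximal height h is y = pi^h z, and z can be adjoined to A. *)
Section MaximalHeight.
Variables (x2 y z : T) (h : nat).
Hypotheses (nSx2 : ~ S x2) (px2 : pi *: x2 = 0).
Hypotheses (Sy : S (y - x2)) (py : pi *: y = 0) (yz : y = pi ^+ h *: z).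
Hypothesis hmax : forall y', S (y' - x2) -> pi *: y' = 0 -> ~ pi_div pi h.+1 y'.

Lemma scale_pow_gt_eq0 v : (h < v)%N -> pi ^+ v *: z = 0.
Proof. by move=> hv; rewrite -(subnK hv) -scale_exprD exprS -scalerA -yz py scaler0. Qed.

Lemma exact_height_top v : pi_div pi v.+1 (pi ^+ v *: z) -> pi ^+ v *: z = 0.
Proof.
move=> hv; case: (ltnP h v) => [/scale_pow_gt_eq0 //| vh]; exfalso.
apply: (hmax Sy py); have := pi_div_scaleD (h - v) hv.
by rewrite scale_exprD addnC subnK // -yz addSn addnC subnK.
Qed.

Lemma top_notin_span : ~ S z.
Proof.
move=> Sz; apply: nSx2; have := in_spanB (in_spanZ (pi ^+ h) Sz) Sy.
by rewrite -yz opprB addrC subrK.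
Qed.

Lemma pi_div_top_coef c s n : S s -> pi_div pi n (c *: z + s) -> pi_div pi n (c *: z).
Proof.
move=> Ss hn; case: (eqVneq c 0) => [->|c0]; first by rewrite scale0r; apply: pi_div0.
have [u [w [Uu def_c]]] := dvr_factor hR c0.
rewrite def_c -scalerA in hn *.
case: (ltnP h w) => [hw|wh]; first by rewrite scale_pow_gt_eq0 // scaler0; apply: pi_div0.
case: (leqP n w) => [nw|wn]; first by apply/pi_divZ/pi_div_scale.
(* Otherwise y plus a multiple of s lies in x2 + S and has height > h. *)
exfalso; pose s1 := (u^-1 * pi ^+ (h - w)) *: s.
have ys1 : y + s1 = pi ^+ (h - w) *: (u^-1 *: (u *: (pi ^+ w *: z) + s)).
  by rewrite /s1 yz !scalerDr !scalerA mulVr // mulr1 -exprD subnK // [u^-1 * _]mulrC.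
have [y' [Sy' py']] : exists y', [/\ S (y' - x2), pi *: y' = 0 & pi_div pi h.+1 y'].
  apply: (lift_socle_coset px2 (w := y + s1)).
    by rewrite addrAC; apply: in_spanD => //; apply: in_spanZ.
  rewrite ys1; apply: (@pi_div_leq _ _ _ _ (h - w + n)); first lia.
  by apply/pi_div_scaleD/pi_divZ.
exact: hmax.
Qed.

Lemma pure_indep_add_top : pure_indep pi (fun t => A t \/ t = z).
Proof.
move=> es c n ues ies hc e ee.
have esA es' : uniq es' -> z \notin es' -> {subset es' <= es} -> all_in A es'.
  move=> _ zes' sub e' e'es; case: (ies e' (sub _ e'es)) => // e'z.
  by rewrite -e'z e'es in zes'.
case zes: (z \in es); last by apply: hPI ues (esA es ues (negbT zes) (fun _ x => x)) hc e ee.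
have ues' := rem_uniq z ues.
have sub : {subset rem z es <= es} by move=> e'; rewrite mem_rem_uniq // inE => /andP[].
have zrem : z \notin rem z es by rewrite mem_rem_uniq // inE eqxx.
have split_z : comb es c = c z *: z + comb (rem z es) c by rewrite /comb (big_rem z zes).
have Ss : S (comb (rem z es) c) by exists (rem z es), c; split => //; apply: esA.
have hz : pi_div pi n (c z *: z) by apply: (pi_div_top_coef Ss); rewrite -split_z.
case: (eqVneq e z) => [-> //|ez].
apply: (hPI ues' (esA _ ues' zrem sub)); last by rewrite mem_rem_uniq // inE ez.
by have := pi_divB hc hz; rewrite split_z addrC addKr.
Qed.

End MaximalHeight.

Lemma extend_family x : ~ S x -> exists z,
  [/\ ~ A z, pure_indep pi (fun t => A t \/ t = z) & exact_heights pi (fun t => A t \/ t = z)].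
Proof.
move=> /socle_notin_span [x2 nSx2 px2].
pose Q h := exists y, [/\ S (y - x2), pi *: y = 0 & pi_div pi h y].
have Q0 : Q 0%N.
  by exists x2; rewrite subrr; split => //; [apply: in_span0 | exists x2; rewrite scale1r].
have Qb k : Q k -> (k <= N)%N.
  case=> y [Sy _ hy]; rewrite leqNgt; apply/negP => /ltnW Nk; apply: nSx2.
  by move: Sy; rewrite (pi_div_eq0 hT Nk hy) sub0r => /(in_spanZ (-1)); rewrite scaleN1r opprK.
have [h [y [Sy py [z yz]]] hmax] := ex_greatest (ex_intro Q 0%N Q0) Qb.
have hmax' y' : S (y' - x2) -> pi *: y' = 0 -> ~ pi_div pi h.+1 y'.
  by move=> Sy' py' hy'; have := hmax h.+1 (ex_intro _ y' (And3 Sy' py' hy')); rewrite ltnn.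
exists z; split.
- by move=> Az; apply: (top_notin_span nSx2 Sy yz); apply: in_span_gen.
- exact: (pure_indep_add_top px2 Sy py yz hmax').
- by move=> e [Ae|->]; [apply: hHE | apply: (exact_height_top Sy py yz hmax')].
Qed.

End Extension.

Lemma chain_bound_seq (T : eqType) (F : (T -> Prop) -> Prop) (es : seq T) :
  classical_sets.total_on F classical_sets.subset ->
  (forall e, e \in es -> exists2 X, F X & X e) -> es != [::] ->
  exists2 X, F X & forall e, e \in es -> X e.
Proof.
move=> tot; elim: es => [//|a es IH] H _.
have [Xa FXa Xaa] := H a (mem_head a es).
case: (eqVneq es [::]) => [->|nes].
  by exists Xa => // e; rewrite inE => /eqP ->.
have [Y FY Yes] : exists2 X, F X & forall e, e \in es -> X e.
  by apply: IH => // e ee; apply: H; rewrite inE ee orbT.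
case: (tot _ _ FXa FY) => sub.
  by exists Y => // e; rewrite inE => /orP[/eqP ->|/Yes]; [apply: sub|].
by exists Xa => // e; rewrite inE => /orP[/eqP -> //|/Yes/sub].
Qed.

Lemma pure_basis_exists (R : idomainType) (pi : R) (T : lmodType R) (N : nat) :
  is_DVR_with_uniformizer pi -> (forall x : T, pi ^+ N *: x = 0) ->
  exists E : T -> Prop, [/\ pure_indep pi E, exact_heights pi E & forall x, in_span E x].
Proof.
move=> hR hT.
have [|A [[hPI hHE] Amax]] :=
    @classical_sets.Zorn_bigcup T (fun E => pure_indep pi E /\ exact_heights pi E).
  move=> F FP Ftot; split; last by move=> e [X FX Xe]; apply: (FP X FX).2.
  move=> es c n ues ies hc e ee.
  have [X FX Xes] : exists2 X, F X & all_in X es.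
    by apply: chain_bound_seq => //; case: es ee {ues ies hc}.
  exact: (FP X FX).1 es c n ues Xes hc e ee.
exists A; split => // x; apply: contrapT => nSx.
have [z [nAz hPIz hHEz]] := extend_family hR hT hPI hHE nSx.
apply: (Amax (fun t => A t \/ t = z)); last by [].
by split=> [t At|sub]; [left | apply/nAz/sub; right].
Qed.

Section Coordinates.
Variables (R : idomainType) (pi : R) (T : lmodType R) (N : nat).
Hypothesis hR : is_DVR_with_uniformizer pi.
Hypothesis hT : forall x : T, pi ^+ N *: x = 0.
Variable E : T -> Prop.
Hypothesis hPI : pure_indep pi E.
Hypothesis hHE : exact_heights pi E.
Hypothesis hspan : forall x, in_span E x.

Lemma rep_ex x : exists p : seq T * (T -> R),
  [/\ uniq p.1, all_in E p.1 & x = comb p.1 p.2].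
Proof. by have [es [c [u i ->]]] := hspan x; exists (es, c). Qed.

Definition rep x := proj1_sig (cid (rep_ex x)).

Lemma repP x : [/\ uniq (rep x).1, all_in E (rep x).1 & x = comb (rep x).1 (rep x).2].
Proof. exact: proj2_sig (cid (rep_ex x)). Qed.

Definition coef e x := if e \in (rep x).1 then (rep x).2 e else 0.
Definition coord e x := coef e x *: e.

Lemma coordE e x es c : uniq es -> all_in E es -> x = comb es c ->
  coord e x = (if e \in es then c e else 0) *: e.
Proof.
move=> ues ies xe; have [u i xr] := repP x.
exact: (comb_unique hT hPI u i ues ies (etrans (esym xr) xe)).
Qed.

Lemma coord_decomp x us : uniq us -> {subset (rep x).1 <= us} ->
  x = \sum_(e <- us) coord e x.
Proof.
move=> uus sub; have [u _ xr] := repP x.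
rewrite {1}xr /comb (big_uniq_widen _ u uus sub); apply: eq_bigr => e _.
by rewrite /coord /coef; case: ifP; rewrite ?scale0r.
Qed.

Lemma coord_inj x y : (forall e, coord e x = coord e y) -> x = y.
Proof.
move=> exy; have uus := undup_uniq ((rep x).1 ++ (rep y).1).
rewrite [LHS](coord_decomp uus (@sub_undup_catl _ _ _)).
rewrite [RHS](coord_decomp uus (@sub_undup_catr _ _ _)).
by apply: eq_bigr => e _; rewrite exy.
Qed.

Lemma coord_lin e r x y : coord e (r *: x + y) = r *: coord e x + coord e y.
Proof.
have [ux ix ex] := repP x; have [uy iy ey] := repP y.
rewrite {1}ex {1}ey comb_lin_undup //.
rewrite (coordE e (undup_uniq _) (all_in_undup_cat ix iy) erefl).
rewrite (coordE e ux ix ex) (coordE e uy iy ey) mem_undup mem_cat.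
case: ifP; case: ifP => /=; rewrite ?scalerDl ?scalerA ?mulr0 ?scale0r ?add0r ?addr0 //.
by case: ifP; rewrite ?scalerA ?scale0r ?scaler0.
Qed.

Lemma coord0 e : coord e 0 = 0.
Proof. by have := coord_lin e (-1) 0 0; rewrite scaler0 addr0 scaleN1r addNr. Qed.

Lemma coordD e x y : coord e (x + y) = coord e x + coord e y.
Proof. by have := coord_lin e 1 x y; rewrite !scale1r. Qed.

Lemma coordZ e r x : coord e (r *: x) = r *: coord e x.
Proof. by rewrite -[r *: x]addr0 coord_lin coord0 addr0. Qed.

Lemma coord_sum e n (F : 'I_n -> T) :
  coord e (\sum_(i < n) F i) = \sum_(i < n) coord e (F i).
Proof. by apply: (big_morph (coord e)); [exact: coordD | exact: coord0]. Qed.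

Definition in_cyc n (e v : T) := exists d : R, v = d *: (pi ^+ n *: e).

Lemma in_cyc0 n e : in_cyc n e 0.
Proof. by exists 0; rewrite scale0r. Qed.

Lemma in_cycD n e v1 v2 : in_cyc n e v1 -> in_cyc n e v2 -> in_cyc n e (v1 + v2).
Proof. by move=> [d1 ->] [d2 ->]; exists (d1 + d2); rewrite scalerDl. Qed.

Lemma in_cyc_leq m n e v : (m <= n)%N -> in_cyc n e v -> in_cyc m e v.
Proof.
by move=> mn [d ->]; exists (d * pi ^+ (n - m)); rewrite -scalerA scale_exprD subnK.
Qed.

Lemma in_cyc_pi n e v : in_cyc n e v -> in_cyc n.+1 e (pi *: v).
Proof. by move=> [d ->]; exists d; rewrite !scalerA exprS mulrA [pi * d]mulrC. Qed.

Lemma in_cyc_coord n y e : pi_div pi n y -> in_cyc n e (coord e y).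
Proof.
move=> hy; have [u i yr] := repP y; rewrite /coord /coef.
case ee: (e \in (rep y).1); last by rewrite scale0r; apply: in_cyc0.
have hc : pi_div pi n ((rep y).2 e *: e) by apply: (hPI u i _ ee); rewrite -yr.
by have [d ->] := pi_div_coef hR hHE (i e ee) hc; exists d.
Qed.

Lemma pi_order_ex (e : T) : exists k, pi ^+ k *: e == 0.
Proof. by exists N; rewrite hT. Qed.

Definition pi_order e := ex_minn (pi_order_ex e).

Lemma pi_orderP e m : pi ^+ m *: e = 0 <-> (pi_order e <= m)%N.
Proof.
rewrite /pi_order; case: ex_minnP => k /eqP Hk Hmin; split; first by move/eqP; apply: Hmin.
by move=> km; rewrite -(subnK km) -scale_exprD Hk scaler0.
Qed.

Lemma in_cyc_eq0 n e v : (pi_order e <= n)%N -> in_cyc n e v -> v = 0.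
Proof. by move=> kn [d ->]; rewrite (pi_orderP e n).2 // scaler0. Qed.

Lemma coord_scale_eq0 h g e x : (h + g)%N = pi_order e ->
  pi ^+ h *: coord e x = 0 <-> in_cyc g e (coord e x).
Proof.
rewrite /coord; move: (coef e x) => c hg; split; last first.
  by move=> [d ->]; rewrite scalerA mulrC -scalerA scale_exprD hg (pi_orderP e _).2 ?scaler0.
case: (eqVneq c 0) => [-> _|c0]; first by rewrite scale0r; apply: in_cyc0.
have [u [w [Uu ->]]] := dvr_factor hR c0.
move=> H; have : u *: (pi ^+ (h + w) *: e) = 0.
  by rewrite -H -scale_exprD !scalerA; congr (_ *: _); ring.
move/(scale_unit_eq0 Uu)/pi_orderP; rewrite -hg leq_add2l => gw.
by exists (u * pi ^+ (w - g)); rewrite scalerA -mulrA -exprD subnK.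
Qed.

Lemma coord_m_minus x e : m_minus pi x ->
  in_cyc (pi_order e - pi_order e %/ 2) e (coord e x).
Proof.
move=> [n [F [HF ->]]]; rewrite coord_sum.
apply: (big_ind (in_cyc _ e)); [exact: in_cyc0 | exact: in_cycD |].
move=> i _; have [/ImPE hi /KerPE ki] := HF i (ltn_ord i).
have Di := in_cyc_coord e hi.
case: (leqP (pi_order e) i) => [ei|ie]; first by rewrite (in_cyc_eq0 ei Di); apply: in_cyc0.
have : in_cyc (pi_order e - i) e (coord e (F i)).
  by apply/(coord_scale_eq0 _ (subnKC (ltnW ie))); rewrite -coordZ ki coord0.
case: (leqP (pi_order e - pi_order e %/ 2) i) => h2 Dk; first exact: in_cyc_leq h2 Di.
by apply: in_cyc_leq Dk; lia.
Qed.

Lemma coord_m_plus x e : m_plus pi x -> in_cyc (pi_order e %/ 2) e (coord e x).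
Proof.
move=> hx; have [a [b [/ImPE ha [/KerPE hb ->]]]] := hx (pi_order e %/ 2)%N.
rewrite coordD; apply: in_cycD; first exact: in_cyc_coord.
have : in_cyc (pi_order e - pi_order e %/ 2) e (coord e b).
  by apply/(coord_scale_eq0 _ (subnKC (leq_div _ 2))); rewrite -coordZ hb coord0.
by apply: in_cyc_leq; lia.
Qed.

Lemma in_cyc_m_minus n e v : (pi_order e <= n + n)%N -> in_cyc n e v -> m_minus pi v.
Proof.
move=> kn [d ->]; apply: (@m_minus_ImKer _ _ _ n); first by apply/pi_divZ; exists e.
by rewrite scalerA mulrC -scalerA scale_exprD (pi_orderP e _).2 ?scaler0.
Qed.

Lemma in_cyc_m_plus n e v : (pi_order e <= (n + n).+1)%N -> in_cyc n e v -> m_plus pi v.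
Proof.
move=> kn [d ->] m; case: (leqP m n) => mn.
  exists (d *: (pi ^+ n *: e)), 0; rewrite addr0 ImPE KerPE scaler0; split => //.
  by apply/pi_divZ/pi_div_scale.
exists 0, (d *: (pi ^+ n *: e)); rewrite add0r ImPE KerPE; split; first exact: pi_div0.
by rewrite scalerA mulrC -scalerA scale_exprD (pi_orderP e _).2 ?scaler0 //; lia.
Qed.

Definition coords_in (f : nat -> nat) x := forall e, in_cyc (f (pi_order e)) e (coord e x).

Lemma coord_sum_rep x : x = \sum_(e <- (rep x).1) coord e x.
Proof. by have [u _ _] := repP x; apply: coord_decomp. Qed.

Lemma m_plus_coords x : m_plus pi x <-> coords_in (fun k => k %/ 2)%N x.
Proof.
split=> [hx e | hx]; first exact: coord_m_plus.
rewrite (coord_sum_rep x); apply: m_plus_sum => e _.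
by apply: in_cyc_m_plus (hx e); lia.
Qed.

Lemma m_minus_coords x : m_minus pi x <-> coords_in (fun k => k - k %/ 2)%N x.
Proof.
split=> [hx e | hx]; first exact: coord_m_minus.
rewrite (coord_sum_rep x); apply: m_minus_sum => e _.
by apply: in_cyc_m_minus (hx e); lia.
Qed.

Definition scale_coords (f : nat -> nat) x :=
  \sum_(e <- (rep x).1) pi ^+ f (pi_order e) *: coord e x.

Lemma coord_scale_coords f x e :
  coord e (scale_coords f x) = pi ^+ f (pi_order e) *: coord e x.
Proof.
have [u i _] := repP x.
have -> : scale_coords f x = comb (rep x).1 (fun e => pi ^+ f (pi_order e) * coef e x).
  by apply: eq_bigr => e' _; rewrite /coord scalerA.
rewrite (coordE e u i erefl) /coord /coef.
by case: ifP => ee; rewrite ?ee ?scalerA ?mulr0.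
Qed.

Lemma scale_coords_lin f : is_Rlinear (scale_coords f).
Proof.
move=> c x y; apply: coord_inj => e.
by rewrite coord_lin !coord_scale_coords coord_lin scalerDr !scalerA [_ * c]mulrC.
Qed.

Lemma scale_coords_eq0 f g x : (forall k, f k + g k = k)%N ->
  scale_coords f x = 0 <-> coords_in g x.
Proof.
move=> fg; split=> [z e | H].
  by apply/(coord_scale_eq0 _ (fg _)); rewrite -coord_scale_coords z coord0.
by apply: coord_inj => e; rewrite coord_scale_coords coord0; apply/(coord_scale_eq0 _ (fg _)).
Qed.

Lemma scale_coords_img f y : coords_in f y <-> exists x, y = scale_coords f x.
Proof.
split=> [H | [x ->] e]; last first.
  by rewrite coord_scale_coords; exists (coef e x); rewrite /coord !scalerA mulrC.
have [d hd] : {d : T -> R & forall e, coord e y = d e *: (pi ^+ f (pi_order e) *: e)}.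
  apply: (choice (P := fun e d => coord e y = d *: (pi ^+ f (pi_order e) *: e))) => e.
  by have [d ->] := H e; exists d.
have [u i _] := repP y.
exists (comb (rep y).1 d); apply: coord_inj => e.
rewrite coord_scale_coords (coordE e u i erefl); case: ifP => ee.
  by rewrite hd !scalerA mulrC.
by rewrite /coord /coef ee !scale0r scaler0.
Qed.

Lemma iso_scale_coords f g (P Q : T -> Prop) : (forall k, f k + g k = k)%N ->
  (forall x, P x <-> coords_in f x) -> (forall x, Q x <-> coords_in g x) ->
  iso_to_quotient P Q.
Proof.
move=> fg hP hQ; exists (scale_coords f); split; first exact: scale_coords_lin.
split=> x; first exact: iff_trans (hP x) (scale_coords_img f x).
exact: iff_trans (hQ x) (iff_sym (scale_coords_eq0 x fg)).
Qed.

Lemma pi_m_plus_sub_m_minus (x : T) : m_plus pi x -> m_minus pi (pi *: x).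
Proof.
move=> /m_plus_coords hx; apply/m_minus_coords => e.
by rewrite coordZ; apply: (in_cyc_leq _ (in_cyc_pi (hx e))); lia.
Qed.

End Coordinates.

Theorem proposition1p3p3 (R : idomainType) (pi : R) (T : lmodType R) (N : nat)
  (hR : is_DVR_with_uniformizer pi) (hN : (1 <= N)%N)
  (hT : forall x : T, pi ^+ N *: x = 0) :
  (forall x : T, m_plus pi x -> m_minus pi (pi *: x)) /\
  (forall x : T, m_minus pi x -> m_plus pi x) /\
  iso_to_quotient (@m_plus R T pi) (@m_minus R T pi) /\
  iso_to_quotient (@m_minus R T pi) (@m_plus R T pi).
Proof.
have [E [hPI hHE hspan]] := pure_basis_exists hR hT.
have plusE := m_plus_coords hR hT hPI hHE hspan.
have minusE := m_minus_coords hR hT hPI hHE hspan.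
split; first by move=> x; apply: (pi_m_plus_sub_m_minus hR hT hPI hHE hspan).
split; first by move=> x; apply: m_minus_sub_m_plus.
split; first by apply: (iso_scale_coords hR hPI _ plusE minusE) => k; rewrite subnKC ?leq_div.
by apply: (iso_scale_coords hR hPI _ minusE plusE) => k; rewrite subnK ?leq_div.
Qed.
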